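(* Let $H$ be a separable infinite-dimensional complex Hilbert space, $T\in\mathcal{L}(H)$ and $\lambda\in\partial\sigma(T;H)$ (the boundary of the spectrum). Then $T-\lambda I$ is not universal. In particular, if $\sigma(T;H)=\partial\sigma(T;H)$, then $T-\lambda I$ is not universal for any $\lambda\in\mathbb{C}$.
   Context: $\mathcal{L}(H)$ denotes the bounded linear operators on $H$. Operators $T_1\in\mathcal{L}(H_1)$, $T_2\in\mathcal{L}(H_2)$ are similar if there is a linear isomorphism $J:H_1\to H_2$ with $T_1=J^{-1}T_2J$. An operator $U\in\mathcal{L}(H)$ is universal if for every $T\in\mathcal{L}(H)$ there exist a closed subspace $M\subset H$ with $U(M)\subset M$ and a constant $c\neq0$ such that $U|_M:M\to M$ and $cT:H\to H$ are similar. *)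

From mathcomp Require Import all_boot all_order all_algebra.
From mathcomp Require Import all_classical all_reals all_analysis.
From mathcomp Require Import complex.

Set Implicit Arguments.
Unset Strict Implicit.
Unset Printing Implicit Defensive.

Import Order.TTheory GRing.Theory Num.Theory.
Import numFieldNormedType.Exports.
Local Open Scope ring_scope.
Local Open Scope classical_set_scope.

(* The field of complex numbers, seen as a numClosedFieldType (so that it
   carries its canonical normed/topological structure, norm = modulus). *)
Definition Cplx (R : realType) : numClosedFieldType := R[i].

Section Hilbert.
Variables (R : realType) (H : completeNormedModType (Cplx R)).

(* ip is an inner product (linear in the 1st argument, conjugate symmetric)
   inducing the norm of H:  |x|^2 = <x,x>.  Together with completeness of H
   this says that H is a complex Hilbert space. *)
Definition is_inner_product (ip : H -> H -> Cplx R) : Prop :=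
  (forall (a : Cplx R) (x y z : H), ip (a *: x + y) z = a * ip x z + ip y z) /\
  (forall x y : H, ip y x = (ip x y)^*) /\
  (forall x : H, `|x| ^+ 2 = ip x x).

Definition separable_space : Prop :=
  exists D : set H, countable D /\ dense D.

Definition infinite_dimensional : Prop :=
  forall n : nat, exists v : 'I_n -> H,
    forall c : 'I_n -> Cplx R,
      \sum_(i < n) c i *: v i = 0 -> forall i, c i = 0.

Definition is_linear_map (f : H -> H) : Prop :=
  (forall x y, f (x + y) = f x + f y) /\ (forall (a : Cplx R) x, f (a *: x) = a *: f x).

Definition bounded_op (T : H -> H) : Prop := is_linear_map T /\ continuous T.

Definition shift_op (T : H -> H) (lam : Cplx R) : H -> H := fun x => T x - lam *: x.

Definition spectrum (T : H -> H) : set (Cplx R) :=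
  [set lam | ~ exists S : H -> H, bounded_op S /\
       (forall x, S (shift_op T lam x) = x) /\ (forall y, shift_op T lam (S y) = y)].

Definition closed_subspace (M : set H) : Prop :=
  closed M /\ M 0 /\ (forall x y, M x -> M y -> M (x + y)) /\
  (forall (a : Cplx R) x, M x -> M (a *: x)).

(* J is represented by a function H -> H of which only the values on M matter. *)
Definition similar_restr (U : H -> H) (M : set H) (V : H -> H) : Prop :=
  exists J K : H -> H,
    (forall x y, M x -> M y -> J (x + y) = J x + J y) /\
    (forall (a : Cplx R) x, M x -> J (a *: x) = a *: J x) /\
    {within M, continuous J} /\
    bounded_op K /\ (forall y, M (K y)) /\
    (forall x, M x -> K (J x) = x) /\ (forall y, J (K y) = y) /\
    (forall x, M x -> U x = K (V (J x))).

Definition universal (U : H -> H) : Prop :=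
  forall T : H -> H, bounded_op T ->
    exists (M : set H) (c : Cplx R),
      closed_subspace M /\ (forall x, M x -> M (U x)) /\ c != 0 /\
      similar_restr U M (fun x => c *: T x).

End Hilbert.

Definition boundary (R : realType) (S : set (Cplx R)) : set (Cplx R) :=
  closure S `\` interior S.

(* If U = T - lam is universal, then U restricted to some invariant closed
   subspace M0 is similar to the zero operator; M0 <> H, since U = 0 on all of H
   would make every U|_M zero, hence not similar to c I.  The similarity gives a
   bounded isomorphism G : H -> M0 with inverse J0, and composing J0 with the
   orthogonal projection onto M0 yields a bounded W with W (G y) = y and a
   nonzero vector k in its kernel.  For |nu| ||G|| < 1 the fixed point of
   y |-> k + nu G y is an eigenvector: W y = nu y.  Universality applied to W
   turns each such nu into an eigenvalue c nu of U, so a whole disc around lam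
   lies in the spectrum of T: lam is an interior point of the spectrum. *)

From mathcomp Require Import all_boot all_order all_algebra.
From mathcomp Require Import all_classical all_reals all_analysis.
From mathcomp Require Import complex.
From mathcomp Require Import ring lra.
Set Implicit Arguments.
Unset Strict Implicit.
Unset Printing Implicit Defensive.
Import Order.TTheory GRing.Theory Num.Theory.
Import numFieldNormedType.Exports.
Local Open Scope ring_scope.
Local Open Scope classical_set_scope.

Local Notation "x %:C" := (real_complex _ x).

(* Norms in a normed space over [Cplx R] are complex numbers; [rnorm] takes
   their real part so that estimates can be carried out in [R]. *)
Definition rnorm (R : realType) (V : normedModType (Cplx R)) (v : V) : R :=
  complex.Re `|v|.

Section RealNorm.
Variables (R : realType) (V : normedModType (Cplx R)).

Lemma rnormE (v : V) : `|v| = (rnorm v)%:C.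
Proof. by rewrite RRe_real // normr_real. Qed.

Lemma rnorm_ge0 (v : V) : 0 <= rnorm v.
Proof. by rewrite -ler0c -rnormE. Qed.

Lemma rnorm_le (u w : V) : (rnorm u <= rnorm w) = (`|u| <= `|w|).
Proof. by rewrite !rnormE lecR. Qed.

Lemma rnormD (u w : V) : rnorm (u + w) <= rnorm u + rnorm w.
Proof. by rewrite -lecR rmorphD /= -!rnormE ler_normD. Qed.

Lemma rnormB (u w : V) : rnorm (u - w) = rnorm (w - u).
Proof. by rewrite /rnorm distrC. Qed.

Lemma rnormZ (a : Cplx R) (v : V) : rnorm (a *: v) = rnorm a * rnorm v.
Proof. by apply: complexI; rewrite rmorphM /= -!rnormE normrZ. Qed.

Lemma rnorm_eq0 (v : V) : (rnorm v == 0) = (v == 0).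
Proof. by rewrite -(inj_eq (@complexI R)) rmorph0 -rnormE normr_eq0. Qed.

Lemma rnorm_gt0 (v : V) : (0 < rnorm v) = (v != 0).
Proof. by rewrite lt0r rnorm_eq0 rnorm_ge0 andbT. Qed.

End RealNorm.

Lemma rnorm_real (R : realType) (r : R) : 0 <= r -> rnorm (r%:C : Cplx R) = r.
Proof. by move=> r0; rewrite /rnorm ger0_norm ?ler0c. Qed.

Lemma gt0_complexP (R : realType) (e : Cplx R) : 0 < e -> exists2 r : R, 0 < r & e = r%:C.
Proof.
move=> e0; have er : e \is Num.real by rewrite realE ltW.
by exists (complex.Re e); rewrite ?RRe_real // -ltcR RRe_real.
Qed.

Section Continuity.
Variables (R : realType) (V W : normedModType (Cplx R)).

Lemma lipschitz_continuous (f : V -> W) (C : R) : 0 <= C ->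
  (forall x y, rnorm (f x - f y) <= C * rnorm (x - y)) -> continuous f.
Proof.
move=> C0 hf x; apply/cvgrPdist_lt => _ /gt0_complexP [e e0 ->].
apply/nbhs_normP; exists (e / (C + 1))%:C => /= [|t].
  by rewrite (ltcR 0) divr_gt0 //; lra.
rewrite /= (rnormE (x - t)) (rnormE (f x - f t)) !ltcR.
have eE : e / (C + 1) * (C + 1) = e by field; lra.
have := hf x t; have := rnorm_ge0 (x - t); move: eE; move: (e / (C + 1)) => d; nra.
Qed.

Lemma homogeneous_bound (f : V -> W) (M : set V) : M 0 ->
  (forall (a : Cplx R) x, M x -> M (a *: x)) ->
  (forall (a : Cplx R) x, M x -> f (a *: x) = a *: f x) ->
  {within M, continuous f} ->
  exists2 C : R, 0 < C & forall x, M x -> rnorm (f x) <= C * rnorm x.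
Proof.
move=> M0 MZ fZ cf.
have f0 : f 0 = 0 by have := fZ 0 0 M0; rewrite !scale0r.
have [d d0 hd] : exists2 d : R, 0 < d & forall x, M x -> rnorm x < d -> rnorm (f x) < 1.
  have := cvgr_dist_lt _ _ ((subspace_continuousP _ _).1 cf 0 M0) 1 ltr01.
  rewrite /from_subspace f0 => /(_ (within_filter _ (nbhs_filter _))).
  move=> /nbhs_normP [_ /gt0_complexP [d d0 ->] hd].
  exists d => // x Mx xd; have /= := hd x; rewrite !sub0r !normrN.
  rewrite (rnormE x) (rnormE (f x)) -(rmorph1 (real_complex R)) !ltcR.
  by apply.
exists (2 / d) => [|x Mx]; first by rewrite divr_gt0.
have [->|x0] := eqVneq x 0; first by rewrite f0 /rnorm !normr0 mulr0.
have r0 : 0 < rnorm x by rewrite rnorm_gt0.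
pose s := d / (2 * rnorm x).
have s0 : 0 < s by rewrite divr_gt0 // mulr_gt0.
have := hd (s%:C *: x) (MZ _ _ Mx); rewrite fZ // !rnormZ (rnorm_real (ltW s0)).
have -> : s * rnorm x = d / 2 by rewrite /s; field; rewrite gt_eqF.
have sE : s * (2 / d * rnorm x) = 1 by rewrite /s; field; rewrite !gt_eqF.
rewrite -{2}sE ltr_pM2l // => /(_ _)/ltW; apply; lra.
Qed.
End Continuity.

Section FixedPoint.
Variables (R : realType) (V : completeNormedModType (Cplx R)).

Lemma contraction_fixpoint (f : V -> V) (q : R) : 0 <= q -> q < 1 ->
  (forall x y, rnorm (f x - f y) <= q * rnorm (x - y)) -> exists x, f x = x.
Proof.
move=> q0 q1 hf; pose y n := iter n f 0; pose a := rnorm (f 0).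
have a0 : 0 <= a := rnorm_ge0 _.
have step n : rnorm (y n.+1 - y n) <= q ^+ n * a.
  elim: n => [|n IH]; first by rewrite expr0 mul1r subr0.
  by rewrite exprS -mulrA; apply: le_trans (hf _ _) _; apply: ler_wpM2l.
have dist n m : rnorm (y (n + m)%N - y n) * (1 - q) <= q ^+ n * a - q ^+ (n + m) * a.
  elim: m => [|m IH]; first by rewrite addn0 !subrr /rnorm normr0 mul0r.
  have := rnormD (y (n + m).+1 - y (n + m)%N) (y (n + m)%N - y n).
  rewrite addrA subrK addnS exprS; have := step (n + m)%N.
  move: IH; move: (rnorm _) (rnorm _) (rnorm _) (q ^+ n) (q ^+ (n + m)) => u v w P Q.
  nra.
have cy : cvgn y.
  apply/cauchy_cvgP/cauchy_exP => _ /gt0_complexP [e e0 ->].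
  have e' : 0 < e * (1 - q) / (a + 1) by rewrite divr_gt0 ?mulr_gt0 //; lra.
  have q1' : `|q| < 1 by rewrite ger0_norm.
  have [N /= qN] := filter_ex (cvgr_dist_lt _ _ (cvg_expr q1') _ e').
  exists (y N); exists N => // n /= Nn.
  rewrite -ball_normE /= -(subnKC Nn) rnormE rnormB ltcR.
  have := dist N (n - N)%N; rewrite exprD.
  move: qN; rewrite sub0r normrN ger0_norm ?exprn_ge0 // ltr_pdivlMr; last lra.
  have := exprn_ge0 N q0; have := exprn_ge0 (n - N) q0.
  move: (rnorm _) (q ^+ N) (q ^+ (n - N)) => u P Q Q0 P0 PQ du.
  have := mulr_ge0 (mulr_ge0 P0 Q0) a0.
  nra.
have ylim : y @ \oo --> limn y by exact: cy.
have yS : (fun n => y n.+1) @ \oo --> limn y by rewrite cvg_shiftS.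
have fy : (f \o y) @ \oo --> f (limn y).
  apply: continuous_cvg => //; exact: lipschitz_continuous q0 hf _.
by exists (limn y); apply: cvg_unique fy yS.
Qed.

End FixedPoint.

Section InnerProduct.
Variables (R : realType) (H : completeNormedModType (Cplx R)) (ip : H -> H -> Cplx R).
Hypothesis hip : is_inner_product ip.

Lemma ipDZl a x y z : ip (a *: x + y) z = a * ip x z + ip y z.
Proof. by case: hip. Qed.

Lemma ip_conj x y : ip y x = (ip x y)^*.
Proof. by case: hip => _ []. Qed.

Lemma sqr_norm_ip x : `|x| ^+ 2 = ip x x.
Proof. by case: hip => _ []. Qed.

Lemma ipDl x y z : ip (x + y) z = ip x z + ip y z.
Proof. by rewrite -{1}(scale1r x) ipDZl mul1r. Qed.

Lemma ip0l z : ip 0 z = 0.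
Proof. by apply: (addIr (ip 0 z)); rewrite -ipDl !add0r. Qed.

Lemma ipZl a x z : ip (a *: x) z = a * ip x z.
Proof. by rewrite -(addr0 (a *: x)) ipDZl ip0l addr0. Qed.

Lemma ipBl x y z : ip (x - y) z = ip x z - ip y z.
Proof. by rewrite ipDl -scaleN1r ipZl mulN1r. Qed.

Lemma ip0r z : ip z 0 = 0.
Proof. by rewrite ip_conj ip0l conjC0. Qed.

Lemma ipDr x y z : ip z (x + y) = ip z x + ip z y.
Proof. by rewrite ip_conj ipDl rmorphD /= -!ip_conj. Qed.

Lemma ipZr a x z : ip z (a *: x) = a^* * ip z x.
Proof. by rewrite ip_conj ipZl rmorphM /= -ip_conj. Qed.

Lemma ipBr x y z : ip z (x - y) = ip z x - ip z y.
Proof. by rewrite ip_conj ipBl rmorphB /= -!ip_conj. Qed.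

Lemma parallelogram (x y : H) :
  `|x + y| ^+ 2 + `|x - y| ^+ 2 = 2 * `|x| ^+ 2 + 2 * `|y| ^+ 2.
Proof. by rewrite !sqr_norm_ip !ipBl !ipDl !ipBr !ipDr; ring. Qed.

Lemma pythagoras (x y : H) : ip x y = 0 -> `|x + y| ^+ 2 = `|x| ^+ 2 + `|y| ^+ 2.
Proof.
move=> xy; rewrite !sqr_norm_ip ipDl !ipDr xy (ip_conj x y) xy conjC0.
by rewrite addr0 add0r.
Qed.

Lemma sqr_norm_sub_component (z m : H) : m != 0 ->
  `|z - (ip z m / `|m| ^+ 2) *: m| ^+ 2 = `|z| ^+ 2 - `|ip z m| ^+ 2 / `|m| ^+ 2.
Proof.
move=> m0; have n20 : ip m m != 0 by rewrite -sqr_norm_ip sqrf_eq0 normr_eq0.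
have n2J : (ip m m)^* = ip m m.
  by rewrite -sqr_norm_ip conj_Creal // rpredX // normr_real.
rewrite normCK !sqr_norm_ip !ipBl !ipBr !ipZl !ipZr (ip_conj z m) -(sqr_norm_ip z).
by rewrite rmorphM /= fmorphV /= n2J; field.
Qed.

Section Projection.
Variable M : set H.
Hypothesis hM : closed_subspace M.

Let M0 : M 0. Proof. by case: hM => _ []. Qed.
Let MD x y : M x -> M y -> M (x + y). Proof. by case: hM => _ [_ [hD _]]; apply: hD. Qed.
Let MZ a x : M x -> M (a *: x). Proof. by case: hM => _ [_ [_ hZ]]; apply: hZ. Qed.
Let MB x y : M x -> M y -> M (x - y).
Proof. by move=> Mx My; rewrite -scaleN1r; apply/MD/MZ. Qed.

Lemma closest_point_orthogonal x p : M p ->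
  (forall m, M m -> `|x - p| <= `|x - m|) -> forall m, M m -> ip (x - p) m = 0.
Proof.
move=> Mp pmin m Mm; have [->|m0] := eqVneq m 0; first exact: ip0r.
have n20 : `|m| ^+ 2 != 0 by rewrite sqrf_eq0 normr_eq0.
have := pmin _ (MD Mp (MZ (ip (x - p) m / `|m| ^+ 2) Mm)).
rewrite opprD addrA -ler_sqr ?nnegrE // sqr_norm_sub_component //.
rewrite -{1}[`|x - p| ^+ 2]subr0 lerD2l lerN2 => b_le0.
have : `|ip (x - p) m| ^+ 2 / `|m| ^+ 2 == 0.
  by rewrite eq_le b_le0 divr_ge0 // exprn_ge0.
by rewrite mulf_eq0 invr_eq0 (negbTE n20) orbF sqrf_eq0 normr_eq0 => /eqP.
Qed.

Lemma near_minimizers_close x m1 m2 (d e1 e2 : R) : 0 <= d ->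
  (forall m, M m -> d <= rnorm (x - m)) -> M m1 -> M m2 ->
  rnorm (x - m1) <= d + e1 -> rnorm (x - m2) <= d + e2 ->
  rnorm (m1 - m2) ^+ 2 <= 2 * (e1 + e2) * (2 * d + e1 + e2).
Proof.
move=> d0 dM M1 M2 h1 h2; pose w := (2 : Cplx R)^-1 *: (m1 + m2).
have two0 : (2 : Cplx R) != 0 by rewrite pnatr_eq0.
have hw : (x - m1) + (x - m2) = 2 *: (x - w).
  by rewrite scalerBr scalerA mulfV // scale1r scaler_nat mulr2n addrACA opprD.
have := parallelogram (x - m1) (x - m2); rewrite hw normrZ.
rewrite (_ : x - m1 - (x - m2) = m2 - m1); last by rewrite opprB addrC addrA subrK.
rewrite normr_nat !rnormE -(rmorph_nat (real_complex R) 2).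
rewrite -!(rmorphM (real_complex R)) -!(rmorphXn (real_complex R)).
rewrite -!(rmorphM (real_complex R)) -!(rmorphD (real_complex R)) (rnormB m2).
move=> /complexI.
have := dM _ (MZ 2^-1 (MD M1 M2)); have := dM _ M1; have := dM _ M2.
have := rnorm_ge0 (x - w); have := rnorm_ge0 (x - m1); have := rnorm_ge0 (x - m2).
move: h1 h2; move: (rnorm _) (rnorm _) (rnorm _) (rnorm _) => a b c u.
nra.
Qed.

Lemma minimizing_sequence_cvg x (d : R) (mm : nat -> H) : 0 <= d ->
  (forall m, M m -> d <= rnorm (x - m)) ->
  (forall n, M (mm n) /\ rnorm (x - mm n) <= d + n.+1%:R^-1) -> cvgn mm.
Proof.
move=> d0 dM mmP.
have inv_gt0 n : 0 < n.+1%:R^-1 :> R by rewrite invr_gt0 ltr0Sn.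
have inv_le1 n : n.+1%:R^-1 <= 1 :> R by rewrite invf_le1 // ler1n.
apply/cauchy_cvgP/cauchy_exP => _ /gt0_complexP [e e0 ->].
have de0 : 0 < e ^+ 2 / (8 * (d + 1)) by rewrite divr_gt0 ?exprn_gt0 //; lra.
have small := near_infty_natSinv_lt (PosNum de0).
have [N uN] := filter_ex small; exists (mm N); apply: filterS small => n un.
rewrite -ball_normE /= rnormE ltcR.
have [[MN hN] [Mn hn]] := (mmP N, mmP n).
have := near_minimizers_close d0 dM MN Mn hN hn.
rewrite -ltr_sqr ?nnegrE ?rnorm_ge0 ?(ltW e0) //.
have := inv_le1 N; have := inv_le1 n; have := inv_gt0 N; have := inv_gt0 n.
move: uN un => /=; move: (rnorm _) (N.+1%:R^-1 : R) (n.+1%:R^-1 : R) => a u v.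
have : e ^+ 2 / (8 * (d + 1)) * (8 * (d + 1)) = e ^+ 2 by field; lra.
move: (e ^+ 2 / _) => de deE uN un v0 u0 v1 u1 close.
have : (u + v) * (2 * d + u + v) < 2 * de * (2 * d + 2) by nra.
nra.
Qed.

Lemma closest_point_exists x :
  exists2 p, M p & forall m, M m -> `|x - p| <= `|x - m|.
Proof.
pose S := [set rnorm (x - m) | m in M]; pose d := inf S.
have S_inf : has_inf S.
  by split; [exists (rnorm (x - 0)), 0 | exists 0 => _ [m _ <-]; exact: rnorm_ge0].
have dM m : M m -> d <= rnorm (x - m) by move=> Mm; apply: (ge_inf S_inf.2); exists m.
have d0 : 0 <= d by apply: lb_le_inf S_inf.1 _ => _ [m _ <-]; exact: rnorm_ge0.
have near_inf n : exists m, M m /\ rnorm (x - m) <= d + n.+1%:R^-1.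
  have u0 : 0 < n.+1%:R^-1 :> R by rewrite invr_gt0 ltr0Sn.
  by have [_ [m Mm <-] /ltW ?] := inf_adherent u0 S_inf; exists m.
have [mm mmP] := choice near_inf.
have mm_p : mm @ \oo --> limn mm by exact: minimizing_sequence_cvg d0 dM mmP.
exists (limn mm).
  by apply: closed_cvg mm_p; [case: hM | apply: nearW => n; case: (mmP n)].
move=> m Mm; rewrite -rnorm_le; apply: le_trans (dM _ Mm).
apply/ler_addgt0Pr => e e0; have e20 : 0 < e / 2 by rewrite divr_gt0.
have e2C : 0 < (e / 2)%:C by rewrite (ltcR 0).
have small := near_infty_natSinv_lt (PosNum e20).
have close := cvgr_dist_lt _ _ mm_p _ e2C.
have [n [/= un]] := filter_ex (filterI small (close _)).
rewrite rnormE ltcR rnormB => pn.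
have := rnormD (x - mm n) (mm n - limn mm); rewrite addrA subrK.
have := (mmP n).2; move: un pn.
by move: (rnorm _) (rnorm _) (rnorm _) (n.+1%:R^-1 : R) => a b c u; lra.
Qed.

Lemma orthogonal_projection_unique x p q : M p -> M q ->
  (forall m, M m -> ip (x - p) m = 0) -> (forall m, M m -> ip (x - q) m = 0) ->
  p = q.
Proof.
move=> Mp Mq hp hq; have Mpq := MB Mp Mq.
have qp : (x - q) - (x - p) = p - q by rewrite opprB addrC addrA subrK.
apply/eqP; rewrite -subr_eq0 -normr_eq0 -sqrf_eq0 sqr_norm_ip -{1}qp.
by rewrite ipBl hp // hq // subrr.
Qed.

Lemma orthogonal_projection : exists P : H -> H,
  [/\ forall x, M (P x), forall m, M m -> P m = m,
      forall x y, P (x + y) = P x + P y, forall a x, P (a *: x) = a *: P x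
    & forall x, `|P x| <= `|x|].
Proof.
have proj x : exists p, M p /\ forall m, M m -> ip (x - p) m = 0.
  have [p Mp pmin] := closest_point_exists x.
  by exists p; split => //; apply: closest_point_orthogonal.
have [P PP] := choice proj.
have Puniq x p : M p -> (forall m, M m -> ip (x - p) m = 0) -> P x = p.
  by move=> Mp hp; apply: orthogonal_projection_unique (PP x).1 Mp (PP x).2 hp.
exists P; split.
- by move=> x; case: (PP x).
- by move=> m Mm; apply: Puniq => // m' _; rewrite subrr ip0l.
- move=> x y; apply: Puniq; first by apply: MD; [case: (PP x) | case: (PP y)].
  by move=> m Mm; rewrite opprD addrACA ipDl (PP x).2 // (PP y).2 // addr0.
- move=> a x; apply: Puniq; first by apply: MZ; case: (PP x).
  by move=> m Mm; rewrite -scalerBr ipZl (PP x).2 // mulr0.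
- move=> x; have orth : ip (P x) (x - P x) = 0.
    by rewrite ip_conj (PP x).2 ?conjC0 //; case: (PP x).
  have := pythagoras orth; rewrite addrC subrK => Px.
  by rewrite -ler_sqr ?nnegrE // Px lerDl exprn_ge0.
Qed.

End Projection.
End InnerProduct.

Section Operators.
Variables (R : realType) (V : completeNormedModType (Cplx R)).

Lemma linear_map0 (f : V -> V) : is_linear_map f -> f 0 = 0.
Proof. by case=> _ fZ; have := fZ 0 0; rewrite !scale0r. Qed.

Lemma linear_mapB (f : V -> V) : is_linear_map f -> forall x y, f (x - y) = f x - f y.
Proof. by case=> fD fZ x y; rewrite fD -scaleN1r fZ scaleN1r. Qed.

Lemma bounded_op_bound (f : V -> V) : bounded_op f ->
  exists2 C : R, 0 < C & forall x, rnorm (f x) <= C * rnorm x.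
Proof.
case=> [[_ fZ] cf].
have [C C0 hC] := homogeneous_bound (M := setT) I (fun _ _ _ => I)
  (fun a x _ => fZ a x) (continuous_subspaceT (A := setT) (f := f) cf).
by exists C => // x; apply: hC.
Qed.

Lemma eigenvector_of_right_inverse (W G : V -> V) (C : R) (k : V) (nu : Cplx R) :
  is_linear_map W -> is_linear_map G -> 0 <= C ->
  (forall x, rnorm (G x) <= C * rnorm x) -> (forall y, W (G y) = y) ->
  k != 0 -> W k = 0 -> rnorm nu * C < 1 ->
  exists2 y, y != 0 & W y = nu *: y.
Proof.
move=> [WD WZ] lG C0 hG WG k0 Wk nuC.
have contr x y : rnorm ((k + nu *: G x) - (k + nu *: G y)) <= rnorm nu * C * rnorm (x - y).
  rewrite opprD addrACA subrr add0r -scalerBr -linear_mapB // rnormZ -mulrA.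
  by apply: ler_wpM2l; [exact: rnorm_ge0 | exact: hG].
have [y fy] := contraction_fixpoint (mulr_ge0 (rnorm_ge0 _) C0) nuC contr.
exists y; last by rewrite -{1}fy WD WZ Wk WG add0r.
apply: contraNneq k0 => y0; move: fy; rewrite y0 linear_map0 // scaler0 addr0.
by move=> ->.
Qed.

Lemma similar_restr_eigenvector (U A : V -> V) (M : set V) (y : V) (a : Cplx R) :
  similar_restr U M A -> A y = a *: y -> y != 0 -> exists2 x, x != 0 & U x = a *: x.
Proof.
move=> [J [G [_ [JZ [_ [[[_ GZ] _] [GM [_ [JG UJ]]]]]]]]] Ay y0.
exists (G y); last by rewrite UJ // JG Ay GZ.
apply: contraNneq y0 => Gy0; rewrite -(JG y) Gy0.
by have := JZ 0 _ (GM y); rewrite !scale0r => ->.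
Qed.

Lemma eigenvalue_spectrum (T : V -> V) (mu : Cplx R) (x : V) :
  x != 0 -> T x = mu *: x -> spectrum T mu.
Proof.
move=> x0 Tx [S [[lS _] [SL _]]]; move: x0; rewrite -(SL x) /shift_op Tx subrr.
by rewrite linear_map0 ?eqxx.
Qed.

Lemma infinite_dimensional_nontrivial : infinite_dimensional V -> exists y : V, y != 0.
Proof.
move=> /(_ 1%N) [v hv]; exists (v ord0); apply: contraTneq isT => v0.
have := hv (fun _ => 1); rewrite big_ord1 v0 scaler0 => /(_ erefl ord0) /eqP.
by rewrite oner_eq0.
Qed.

Lemma universal_vanishing_subspace (U : V -> V) : (exists y : V, y != 0) ->
  universal U ->
  exists M, [/\ closed_subspace M, exists z, ~ M z & similar_restr U M (fun _ => 0)].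
Proof.
move=> [y y0] hU.
have b0 : bounded_op (fun _ : V => 0 : V).
  split; last exact: cst_continuous.
  by split=> *; rewrite ?addr0 ?scaler0.
have [M [c [hM [_ [_ sim]]]]] := hU _ b0.
rewrite (_ : (fun x => _) = fun _ => 0) in sim; last by apply: funext => x; rewrite scaler0.
exists M; split => //; apply: contrapT => Mfull.
have U0 x : U x = 0.
  have Mx : M x by apply: contrapT => Mx; apply: Mfull; exists x.
  case: sim => J [G [_ [_ [_ [[lG _] [_ [_ [_ UJ]]]]]]]].
  by rewrite UJ // linear_map0.
have bid : bounded_op (@id V).
  split; first by split.
  by apply: (@lipschitz_continuous _ _ _ _ 1) => // a b; rewrite mul1r.
have [M1 [c1 [_ [_ [c10 sim1]]]]] := hU _ bid.
have [x x0] := similar_restr_eigenvector sim1 erefl y0.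
by rewrite U0 => /esym/eqP; rewrite scaler_eq0 (negbTE c10) (negbTE x0).
Qed.

End Operators.

Lemma interior_of_ball (R : realType) (S : set (Cplx R)) (lam r : Cplx R) :
  0 < r -> (forall mu, `|lam - mu| < r -> S mu) -> interior S lam.
Proof.
move=> r0 hr; change (nbhs lam S); apply/nbhs_ballP.
by exists r => // mu; rewrite -ball_normE /=; apply: hr.
Qed.

Section Universal.
Variables (R : realType) (H : completeNormedModType (Cplx R)) (ip : H -> H -> Cplx R).
Hypothesis hip : is_inner_product ip.

Lemma bounded_extension_with_kernel (M : set H) (J : H -> H) (z : H) :
  closed_subspace M -> ~ M z ->
  (forall x y, M x -> M y -> J (x + y) = J x + J y) ->
  (forall (a : Cplx R) x, M x -> J (a *: x) = a *: J x) -> {within M, continuous J} ->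
  exists W, [/\ bounded_op W, forall x, M x -> W x = J x & exists2 k, k != 0 & W k = 0].
Proof.
move=> hM Mz JD JZ cJ; have [_ [M0 [_ MZ]]] := hM.
have [P [PM Pid PD PZ Pn]] := orthogonal_projection hip hM.
have lP : is_linear_map P by split.
have [C C0 hC] := homogeneous_bound M0 MZ JZ cJ.
have lW : is_linear_map (J \o P) by split=> [x y | a x]; rewrite /= (PD, PZ) (JD, JZ).
exists (J \o P); split.
- split=> //; apply: (lipschitz_continuous (ltW C0)) => x y.
  rewrite -linear_mapB //; apply: le_trans (hC _ (PM _)) _.
  by rewrite ler_pM2l // rnorm_le.
- by move=> x Mx; rewrite /= Pid.
- exists (z - P z); first by apply: contra_not_neq Mz => /subr0_eq ->.
  rewrite /= linear_mapB // (Pid _ (PM z)) subrr.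
  by have := JZ 0 0 M0; rewrite !scale0r.
Qed.

Lemma universal_shift_interior (T : H -> H) (lam : Cplx R) :
  infinite_dimensional H -> universal (shift_op T lam) -> interior (spectrum T) lam.
Proof.
move=> /infinite_dimensional_nontrivial H_nz hU.
have [M0 [hM0 [z Mz] [J0 [G [J0D [J0Z [cJ0 [bG [GM [_ [J0G _]]]]]]]]]]] :=
  universal_vanishing_subspace H_nz hU.
have [W [bW WJ [k k0 Wk]]] := bounded_extension_with_kernel hM0 Mz J0D J0Z cJ0.
have WG y : W (G y) = y by rewrite WJ.
have [M [c [_ [_ [c0 simW]]]]] := hU W bW.
have [C C0 hC] := bounded_op_bound bG.
have c_gt0 : 0 < rnorm c by rewrite rnorm_gt0.
apply: (@interior_of_ball _ _ _ (rnorm c / C)%:C); first by rewrite (ltcR 0) divr_gt0.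
move=> mu; rewrite rnormE ltcR ltr_pdivlMr // => small.
pose nu := (mu - lam) / c.
have cnu : c * nu = mu - lam by rewrite mulrC divfK.
have nuC : rnorm nu * C < 1.
  have : rnorm c * rnorm nu = rnorm (lam - mu).
    by rewrite -rnormZ; change (rnorm (c * nu) = rnorm (lam - mu)); rewrite cnu rnormB.
  move: small; move: (rnorm (lam - mu)) => a; nra.
have [y y0 Wy] := eigenvector_of_right_inverse bW.1 bG.1 (ltW C0) hC WG k0 Wk nuC.
have cWy : c *: W y = (c * nu) *: y by rewrite Wy scalerA.
have [x x0] := similar_restr_eigenvector simW cWy y0.
rewrite /shift_op cnu scalerBl => /(congr1 (+%R^~ (lam *: x))); rewrite !subrK.
exact: eigenvalue_spectrum x0.
Qed.
End Universal.

Theorem corollary2p4 (R : realType) (H : completeNormedModType (Cplx R))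
  (ip : H -> H -> Cplx R) :
  is_inner_product ip -> separable_space H -> infinite_dimensional H ->
  forall T : H -> H, bounded_op T ->
    (forall lam : Cplx R, boundary (spectrum T) lam -> ~ universal (shift_op T lam)) /\
    (spectrum T = boundary (spectrum T) ->
       forall lam : Cplx R, ~ universal (shift_op T lam)).
Proof.
move=> hip _ hinf T _; split.
- by move=> lam [_ not_int] /(universal_shift_interior hip hinf).
- move=> spec_bd lam /(universal_shift_interior hip hinf) lam_int.
  have : spectrum T lam by exact: interior_subset.
  by rewrite spec_bd => -[_].
Qed.
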